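(* Let $n$ be sufficiently large, let $f\colon\{0,1\}^n\to\{0,1\}$, let $\widetilde{\epsilon}>0$, let $t,r\in[\Lambda]$ with $t\ge r$, and let $H$ be a power of $2$ with $H=O(n/\widetilde{\epsilon}^2)$ and $H2^t\ge\sqrt n$, $H2^r\ge\sqrt n$. Let $I\subseteq[n]$ be nonempty with $|I|\ge H\widetilde{\epsilon}^2/2$, and suppose every $i\in I$ satisfies \[\min\{\mathrm{Score}_i^+,\mathrm{Score}_i^-\}=\min\Big\{\mathrm{Score}^+_{i,t}\cdot\tfrac{2^t}{\sqrt n},\ \mathrm{Score}^-_{i,r}\cdot\tfrac{2^r}{\sqrt n}\Big\}\in\big[1/H,\,2/H\big].\] Let $\alpha=|I|2^t/n$ and $\beta=|I|2^r/n$. Then for each $i\in I$, at least a $1/8$ fraction of the sets $S\in\mathcal{P}_{i,t}$ are informative for the $i$th coordinate.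
   Context: For $x\in\{0,1\}^n$ and $i\in[n]$, $x^{(i)}$ denotes $x$ with its $i$th bit flipped. An edge $(x,x^{(i)})$ of the hypercube is monotone if $f$ strictly increases along it in direction $i$ (from the endpoint with $i$th bit $0$ to the endpoint with $i$th bit $1$), and anti-monotone if $f$ strictly decreases along it; $E_i^+$ and $E_i^-$ denote the monotone and anti-monotone edges in direction $i$. $\textsc{AE-Search}$ is a fixed randomized query procedure that, on input a point $x\in\{0,1\}^n$ and a set $S\subseteq[n]$, outputs either an index in $S$ or nothing. $\Lambda=O(\log n)$ is a fixed positive integer parameter with $2^j\le n$ for all $j\in[\Lambda]$. For $i\in[n]$ and $j\in[\Lambda]$, $\mathcal{P}_{i,j}$ is the family of subsets of $[n]\setminus\{i\}$ of size $2^j-1$. A pair $(x,S)$ with $S\subseteq[n]\setminus\{i\}$ is a good pair for $E_i^+$ (resp. $E_i^-$) if $(x,x^{(i)})$ is a monotone (resp. anti-monotone) edge and $\textsc{AE-Search}(x,S\cup\{i\})$ returns $i$ with probability at least $1/2$. $\mathrm{Good}_i^{\pm}(S)$ is the set of $x$ with $(x,S)$ good for $E_i^\pm$, and $\mathrm{GoodFrac}_i^\pm(S)=|\mathrm{Good}_i^\pm(S)|/2^n$. A point $x$ is $j$-strong for $E_i^\pm$ if $(x,S)$ is good for $E_i^\pm$ for at least $3/4$ of the sets $S\in\mathcal{P}_{i,j}$; $\mathrm{Score}^\pm_{i,j}$ is the fraction of $x\in\{0,1\}^n$ that are $j$-strong for $E_i^\pm$, and $\mathrm{Score}_i^\pm=\max_{j\in[\Lambda]}\mathrm{Score}^\pm_{i,j}\cdot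 2^j/\sqrt n$. A set $S\in\mathcal{P}_{i,t}$ ($i\in I$) is informative for the $i$th coordinate if (1) $\mathrm{GoodFrac}_i^+(S)\ge 0.1\,\widetilde{\epsilon}^2/(\alpha\sqrt n)$, and (2) at least a $0.1$ fraction of the $(2^r-1)$-sized subsets $T\subseteq S$ satisfy $\mathrm{GoodFrac}_i^-(T)\ge 0.1\,\widetilde{\epsilon}^2/(\beta\sqrt n)$. *)

From HB Require Import structures.
From mathcomp Require Import all_boot all_order all_algebra.
From mathcomp Require Import reals.
Set Implicit Arguments. Unset Strict Implicit. Unset Printing Implicit Defensive.
Import Order.TTheory GRing.Theory Num.Theory.
Local Open Scope ring_scope.

Definition point (n : nat) := {ffun 'I_n -> bool}.

Definition setbit n (x : point n) (i : 'I_n) (b : bool) : point n :=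
  [ffun k => if k == i then b else x k].

(* A randomized procedure AE-Search(x, S) is modelled by its output
   distribution: ae x S o = probability of output o, where o = Some j means
   "outputs index j" and None means "outputs nothing". *)
Definition is_AESearch (R : realType) n
    (ae : point n -> {set 'I_n} -> option 'I_n -> R) : Prop :=
  forall x S,
    (forall o, 0 <= ae x S o) /\ (\sum_(o : option 'I_n) ae x S o = 1) /\
    (forall j, j \notin S -> ae x S (Some j) = 0).

Definition mono_edge n (f : point n -> bool) (pm : bool) (x : point n) (i : 'I_n) : bool :=
  if pm then (~~ f (setbit x i false)) && f (setbit x i true)
  else f (setbit x i false) && ~~ f (setbit x i true).

Definition Pfam n (i : 'I_n) (j : nat) : {set {set 'I_n}} :=
  [set S : {set 'I_n} | (i \notin S) && (#|S| == (2 ^ j).-1)%N].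

Section Defs.
Variables (R : realType) (n : nat) (f : point n -> bool)
          (ae : point n -> {set 'I_n} -> option 'I_n -> R).

Definition good (pm : bool) (i : 'I_n) (x : point n) (S : {set 'I_n}) : bool :=
  [&& i \notin S, mono_edge f pm x i & 1 / 2 <= ae x (i |: S) (Some i)].

Definition GoodFrac pm i (S : {set 'I_n}) : R :=
  #|[set x : point n | good pm i x S]|%:R / (2 ^ n)%:R.

Definition strong pm i (j : nat) (x : point n) : bool :=
  (3 / 4 : R) * #|Pfam i j|%:R <= #|[set S in Pfam i j | good pm i x S]|%:R.

Definition ScoreJ pm i (j : nat) : R :=
  #|[set x : point n | strong pm i j x]|%:R / (2 ^ n)%:R.

Definition Score (Lambda : nat) pm i : R :=
  \big[Num.max/0]_(1 <= j < Lambda.+1) (ScoreJ pm i j * (2 ^ j)%:R / Num.sqrt n%:R).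

Definition informative (eps alpha beta : R) (t r : nat) (i : 'I_n)
    (S : {set 'I_n}) : bool :=
  [&& S \in Pfam i t,
      (1 / 10) * eps ^+ 2 / (alpha * Num.sqrt n%:R) <= GoodFrac true i S &
      (1 / 10 : R) * #|[set T : {set 'I_n} | (T \subset S) && (#|T| == (2 ^ r).-1)%N]|%:R
      <= #|[set T : {set 'I_n} | [&& T \subset S, #|T| == (2 ^ r).-1 &
              (1 / 10) * eps ^+ 2 / (beta * Num.sqrt n%:R) <= GoodFrac false i T]]|%:R].
End Defs.

From HB Require Import structures.
From mathcomp Require Import all_boot all_order all_algebra.
From mathcomp Require Import reals.
From mathcomp Require Import ring lra.
Set Implicit Arguments. Unset Strict Implicit. Unset Printing Implicit Defensive.
Import Order.TTheory GRing.Theory Num.Theory.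

(* A j-strong point forms a good pair with at least 3/4 of the sets of P_{i,j}, so
   double counting strong points against sets shows that at least 11/16 of P_{i,j}
   have GoodFrac at least tau, as soon as tau is at most a fifth of Score_{i,j}.  The
   score hypotheses put both thresholds in the definition of "informative" below
   that level.  A second averaging, over the inclusions between P_{i,r} and P_{i,t}
   (a biregular bipartite graph), turns "11/16 of P_{i,r} is good for E_i^-" into
   "47/72 of P_{i,t} has a tenth of its (2^r - 1)-subsets good for E_i^-".  Since
   11/16 + 47/72 - 1 > 1/8, both conditions hold on a 1/8 fraction of P_{i,t}; no
   largeness of n is needed. *)

Lemma card_set_in_sum (T : finType) (A : {set T}) (p : pred T) :
  #|[set x in A | p x]| = \sum_(x in A) p x.
Proof. by rewrite -sum1dep_card big_mkcondr. Qed.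

Lemma double_count (X Y : finType) (Q : {set X}) (P : {set Y}) (g : X -> Y -> bool) :
  \sum_(y in P) #|[set x in Q | g x y]| = \sum_(x in Q) #|[set y in P | g x y]|.
Proof.
rewrite (eq_bigr (fun y => \sum_(x in Q) g x y)) => [|y _]; last first.
  exact: (card_set_in_sum Q (g^~ y)).
by rewrite exchange_big; apply: eq_bigr => x _; rewrite (card_set_in_sum P (g x)).
Qed.

Lemma card_supersets (X : finType) (D T : {set X}) m :
  T \subset D -> (#|T| <= m)%N ->
  #|[set S : {set X} | [&& T \subset S, S \subset D & #|S| == m]]|
    = 'C(#|D| - #|T|, m - #|T|).
Proof.
move=> sTD leTm; rewrite -cardsDS // -cards_draws.
have DUK (S : {set X}) : T \subset S -> S :\: T :|: T = S.
  move=> sTS; apply/setP => x; rewrite !inE.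
  by case: (boolP (x \in T)) => [/(subsetP sTS)->|]; rewrite ?orbT ?orbF ?andbT.
have UDK (B : {set X}) : [disjoint B & T] -> (B :|: T) :\: T = B.
  move=> dBT; apply/setP => x; rewrite !inE.
  by case: (boolP (x \in T)) => [xT | _]; rewrite ?(disjointFl dBT xT) ?orbF.
set Sup := [set S : {set X} | _].
have injD : {in Sup &, injective (fun S => S :\: T)}.
  move=> S1 S2; rewrite !inE => /and3P[sTS1 _ _] /and3P[sTS2 _ _] eqD.
  by rewrite -(DUK S1) // eqD DUK.
rewrite -(card_in_imset injD).
apply: eq_card => B; rewrite inE; apply/imsetP/andP.
- case=> S; rewrite inE => /and3P[sTS sSD /eqP cS] ->.
  by rewrite setSD // cardsDS // cS.
- case=> /subsetDP[sBD dBT] /eqP cB; exists (B :|: T); last by rewrite UDK.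
  rewrite inE subsetUr subUset sBD sTD cardsU (disjoint_setI0 dBT) cards0 subn0 cB.
  by rewrite subnK ?eqxx.
Qed.

Local Open Scope ring_scope.

Lemma sum_le_threshold (R : numDomainType) (Y : finType) (P : {set Y}) (p : pred Y)
    (h : Y -> R) (M b : R) :
  (forall y, y \in P -> h y <= M) -> (forall y, y \in P -> ~~ p y -> h y <= b) ->
  \sum_(y in P) h y <= b * #|P|%:R + (M - b) * #|[set y in P | p y]|%:R.
Proof.
move=> hM hb; rewrite card_set_in_sum natr_sum mulr_sumr mulr_natr -sumr_const -big_split.
apply: ler_sum => y yP; case: (boolP (p y)) => py /=.
  by rewrite mulr1 addrC subrK hM.
by rewrite mulr0 addr0 hb.
Qed.

Lemma cardsI_ge_frac (R : realDomainType) (X : finType) (P A B : {set X}) (x y : R) :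
  A \subset P -> B \subset P -> x * #|P|%:R <= #|A|%:R -> y * #|P|%:R <= #|B|%:R ->
  (x + y - 1) * #|P|%:R <= #|A :&: B|%:R.
Proof.
move=> sAP sBP hA hB.
have : (#|A :|: B| <= #|P|)%N by rewrite subset_leq_card // subUset sAP.
rewrite -(ler_nat R) => hU.
move: (cardsUI A B) => /eqP; rewrite -(eqr_nat R) !natrD => /eqP hUI.
lra.
Qed.

Section RichSupersets.
Variables (R : realFieldType) (X : finType) (D : {set X}) (k m : nat).
Hypothesis lekm : (k <= m)%N.

Local Notation Dk := [set T : {set X} | T \subset D & #|T| == k].
Local Notation Dm := [set S : {set X} | S \subset D & #|S| == m].

Lemma card_subsets_in (S : {set X}) : S \in Dm ->
  #|[set T in Dk | T \subset S]| = 'C(m, k).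
Proof.
rewrite inE => /andP[sSD /eqP cS]; rewrite -cS -cards_draws.
apply: eq_card => T; rewrite !inE andbC andbA; case: (boolP (T \subset S)) => //= sTS.
by rewrite (subset_trans sTS sSD).
Qed.

Lemma card_supersets_in (T : {set X}) : T \in Dk ->
  #|[set S in Dm | T \subset S]| = 'C(#|D| - k, m - k).
Proof.
rewrite inE => /andP[sTD /eqP cT]; rewrite -cT -card_supersets ?cT //.
by apply: eq_card => S; rewrite !inE andbC.
Qed.

Lemma many_rich_supersets (G : pred {set X}) (a b : R) : b < 1 ->
  a * #|Dk|%:R <= #|[set T in Dk | G T]|%:R ->
  (a - b) / (1 - b) * #|Dm|%:R <= #|[set S in Dm |
     b * #|[set T : {set X} | T \subset S & #|T| == k]|%:R
       <= #|[set T : {set X} | [&& T \subset S, #|T| == k & G T]]|%:R]|%:R.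
Proof.
move=> b_lt1 hG.
set c := 'C(m, k); set d := 'C(#|D| - k, m - k); set QG := [set T in Dk | G T].
have c_gt0 : (0 : R) < c%:R by rewrite ltr0n bin_gt0.
have count_pairs : (#|Dm| * c = #|Dk| * d)%N.
  rewrite -[LHS]sum_nat_const -[RHS]sum_nat_const.
  rewrite -(eq_bigr _ card_subsets_in) -(eq_bigr _ card_supersets_in).
  exact: (double_count Dk Dm (fun T S => T \subset S)).
pose h (S : {set X}) := #|[set T in QG | T \subset S]|.
have count_good_pairs : (\sum_(S in Dm) h S = #|QG| * d)%N.
  rewrite double_count (eq_bigr (fun=> d)) ?sum_nat_const // => T.
  by rewrite inE => /andP[/card_supersets_in].
have h_eq S : S \in Dm ->
    h S = #|[set T : {set X} | [&& T \subset S, #|T| == k & G T]]|.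
  rewrite inE => /andP[sSD _]; apply: eq_card => T; rewrite !inE.
  by case: (boolP (T \subset S)) => [sTS | _]; rewrite ?andbT ?andbF ?(subset_trans sTS sSD).
have drawsE S : S \in Dm -> #|[set T : {set X} | T \subset S & #|T| == k]| = c.
  by rewrite inE => /andP[_ /eqP cS]; rewrite cards_draws cS.
have h_le_c S : S \in Dm -> (h S)%:R <= c%:R :> R.
  move=> SDm; rewrite ler_nat /c -(card_subsets_in SDm) subset_leq_card //.
  by apply/subsetP => T; rewrite !inE => /andP[/andP[]] ->.
have h_poor S : S \in Dm -> ~~ (b * #|[set T : {set X} | T \subset S & #|T| == k]|%:R
      <= #|[set T : {set X} | [&& T \subset S, #|T| == k & G T]]|%:R) ->
    (h S)%:R <= b * c%:R.
  by move=> SDm; rewrite -ltNge (h_eq S SDm) (drawsE S SDm) => /ltW.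
have := sum_le_threshold h_le_c h_poor.
rewrite -natr_sum count_good_pairs natrM.
have : a * (#|Dm| * c)%:R <= #|QG|%:R * d%:R.
  by rewrite count_pairs natrM mulrA ler_wpM2r.
rewrite natrM => hlo hup.
rewrite mulrAC ler_pdivrMr ?subr_gt0 // -(ler_pM2l c_gt0); nra.
Qed.

End RichSupersets.

Section Arithmetic.
Variable R : realFieldType.

Lemma gt0_of_inv_le (H T sq p : R) : 0 < H -> 0 < T -> 0 < sq ->
  1 / H <= p * T / sq -> 0 < p.
Proof.
move=> H_gt0 T_gt0 sq_gt0 lb.
have : 0 < p * T / sq by apply: lt_le_trans lb; rewrite divr_gt0.
by rewrite pmulr_lgt0 ?invr_gt0 // pmulr_lgt0.
Qed.

Lemma threshold_le_score (e sq nR H X T p : R) :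
  0 < e -> 0 < sq -> sq ^+ 2 = nR -> 0 < H -> 0 < T ->
  H * e / 2 <= X -> 1 / H <= p * T / sq ->
  1 / 10 * e / (X * T / nR * sq) <= 1 / 5 * p.
Proof.
move=> e_gt0 sq_gt0 <- H_gt0 T_gt0 hX lb.
have X_gt0 : 0 < X by apply: lt_le_trans hX; rewrite divr_gt0 ?mulr_gt0.
have pT_gt0 : 0 < p * T by rewrite mulr_gt0 // (gt0_of_inv_le H_gt0 T_gt0 sq_gt0 lb).
have sq_le : sq <= p * T * H.
  by move: lb; rewrite ler_pdivlMr // mulrAC mul1r ler_pdivrMr.
have -> : 1 / 10 * e / (X * T / sq ^+ 2 * sq) = e * sq / (10 * X * T).
  by field; rewrite !gt_eqF.
rewrite ler_pdivrMr ?mulr_gt0 //; nra.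
Qed.

End Arithmetic.

Lemma PfamE n (i : 'I_n) j :
  Pfam i j = [set S : {set 'I_n} | S \subset [set~ i] & #|S| == (2 ^ j).-1].
Proof. by apply/setP => S; rewrite !inE subsetC sub1set inE. Qed.

Section Scores.
Variables (R : realType) (n : nat) (f : point n -> bool)
          (ae : point n -> {set 'I_n} -> option 'I_n -> R).

Lemma many_good_sets pm i j (tau delta : R) : delta < 1 ->
  0 < ScoreJ f ae pm i j -> tau <= delta * ScoreJ f ae pm i j ->
  (3 / 4 - delta) / (1 - delta) * #|Pfam i j|%:R
    <= #|[set S in Pfam i j | tau <= GoodFrac f ae pm i S]|%:R.
Proof.
rewrite /ScoreJ => delta_lt1 score_gt0 tau_le.
set P := Pfam i j; set N : R := (2 ^ n)%:R.
set Q := [set x | strong f ae pm i j x]; set s := #|Q|.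
have N_gt0 : 0 < N by rewrite ltr0n expn_gt0.
have s_gt0 : (0 : R) < s%:R by move: score_gt0; rewrite pmulr_lgt0 // invr_gt0.
pose h S := #|[set x in Q | good f ae pm i x S]|.
have sum_lo : s%:R * (3 / 4 * #|P|%:R) <= \sum_(S in P) (h S)%:R :> R.
  rewrite -natr_sum double_count natr_sum mulr_natl -sumr_const.
  by apply: ler_sum => x; rewrite inE.
have h_le_s S : S \in P -> (h S)%:R <= s%:R :> R.
  by move=> _; rewrite ler_nat subset_leq_card //; apply/subsetP => x; rewrite inE => /andP[].
have h_light S : S \in P -> ~~ (tau <= GoodFrac f ae pm i S) -> (h S)%:R <= delta * s%:R.
  rewrite /GoodFrac -ltNge ltr_pdivrMr // => _ few_good.
  have h_le_good : (h S)%:R <= #|[set x | good f ae pm i x S]|%:R :> R.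
    by rewrite ler_nat subset_leq_card //; apply/subsetP => x; rewrite !inE => /andP[].
  have : tau * N <= delta * s%:R.
    by move: tau_le; rewrite mulrA ler_pdivlMr.
  lra.
have := sum_le_threshold h_le_s h_light.
move=> hup; rewrite mulrAC ler_pdivrMr ?subr_gt0 // -(ler_pM2l s_gt0); nra.
Qed.

Lemma many_good_sets_of_score pm i j (eps : R) (H m : nat) :
  (0 < H)%N -> 0 < eps -> H%:R * eps ^+ 2 / 2 <= m%:R ->
  1 / H%:R <= ScoreJ f ae pm i j * (2 ^ j)%:R / Num.sqrt n%:R ->
  (11 / 16 : R) * #|Pfam i j|%:R
    <= #|[set S in Pfam i j | 1 / 10 * eps ^+ 2 / ((m * 2 ^ j)%:R / n%:R * Num.sqrt n%:R)
                                <= GoodFrac f ae pm i S]|%:R.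
Proof.
move=> H_gt0 eps_gt0 hm lb.
have sq_gt0 : 0 < Num.sqrt (n%:R : R).
  by rewrite sqrtr_gt0 ltr0n (leq_ltn_trans (leq0n i) (ltn_ord i)).
have sqE : Num.sqrt (n%:R : R) ^+ 2 = n%:R by rewrite sqr_sqrtr // ler0n.
have H_gt0R : (0 : R) < H%:R by rewrite ltr0n.
have pow2_gt0 : (0 : R) < (2 ^ j)%:R by rewrite ltr0n expn_gt0.
have -> : (11 / 16 : R) = (3 / 4 - 1 / 5) / (1 - 1 / 5) by field.
apply: many_good_sets; first by lra.
  exact: gt0_of_inv_le H_gt0R pow2_gt0 sq_gt0 lb.
rewrite natrM; apply: threshold_le_score lb => //; exact: exprn_gt0.
Qed.

End Scores.

Theorem mainTheorem1 (R : realType) (C : R) (hC : 0 < C) :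
  exists N : nat, forall (n : nat), (N <= n)%N ->
  forall (f : point n -> bool) (ae : point n -> {set 'I_n} -> option 'I_n -> R)
         (Lambda : nat) (eps : R) (t r H : nat) (I : {set 'I_n}),
  is_AESearch ae ->
  (0 < Lambda)%N ->
  (forall j, (1 <= j <= Lambda)%N -> (2 ^ j <= n)%N) ->
  0 < eps ->
  (1 <= r)%N -> (r <= t)%N -> (t <= Lambda)%N ->
  (exists k, H = (2 ^ k)%N) ->
  H%:R <= C * n%:R / eps ^+ 2 ->
  Num.sqrt (n%:R : R) <= (H * 2 ^ t)%:R ->
  Num.sqrt (n%:R : R) <= (H * 2 ^ r)%:R ->
  I != set0 ->
  H%:R * eps ^+ 2 / 2 <= #|I|%:R ->
  (forall i, i \in I ->
     Num.min (Score f ae Lambda true i) (Score f ae Lambda false i)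
       = Num.min (ScoreJ f ae true i t * (2 ^ t)%:R / Num.sqrt n%:R)
                 (ScoreJ f ae false i r * (2 ^ r)%:R / Num.sqrt n%:R)
     /\ 1 / H%:R <= Num.min (Score f ae Lambda true i) (Score f ae Lambda false i)
     /\ Num.min (Score f ae Lambda true i) (Score f ae Lambda false i) <= 2 / H%:R) ->
  let alpha : R := (#|I| * 2 ^ t)%:R / n%:R in
  let beta : R := (#|I| * 2 ^ r)%:R / n%:R in
  forall i, i \in I ->
    (1 / 8 : R) * #|Pfam i t|%:R
      <= #|[set S in Pfam i t | informative f ae eps alpha beta t r i S]|%:R.
Proof.
exists 0%N => n _ f ae Lambda eps t r H I _ _ _ eps_gt0 _ le_rt _ [k eH] _ _ _ _ hI hscore
  alpha beta i iI.
have [scoreE [lb _]] := hscore i iI.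
move: lb; rewrite scoreE le_min => /andP[lb_t lb_r].
have H_gt0 : (0 < H)%N by rewrite eH expn_gt0.
have hA := many_good_sets_of_score H_gt0 eps_gt0 hI lb_t.
have hB0 := many_good_sets_of_score H_gt0 eps_gt0 hI lb_r.
have le_sizes : ((2 ^ r).-1 <= (2 ^ t).-1)%N by rewrite -!subn1 leq_sub2r // leq_pexp2l.
rewrite !PfamE in hA hB0 *.
have tenth_lt1 : (1 / 10 : R) < 1 by lra.
have hB := many_rich_supersets le_sizes tenth_lt1 hB0.
set Dt := [set S : {set 'I_n} | S \subset [set~ i] & #|S| == (2 ^ t).-1] in hA hB *.
set A := [set S in Dt | _ <= GoodFrac f ae true i S] in hA.
set A2 := [set S in Dt | _] in hB.
have -> : [set S in Dt | informative f ae eps alpha beta t r i S] = A :&: A2.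
  apply/setP => S; rewrite /informative PfamE !inE.
  by case: (S \subset _); case: (#|S| == _).
have sub_Dt (p : pred {set 'I_n}) : [set S in Dt | p S] \subset Dt.
  by apply/subsetP => S; rewrite inE => /andP[].
apply: le_trans (cardsI_ge_frac (sub_Dt _) (sub_Dt _) hA hB).
have -> : ((11 / 16 - 1 / 10) / (1 - 1 / 10) : R) = 47 / 72 by field.
by rewrite ler_wpM2r //; lra.
Qed.
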